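(* Let $G=(V,E)$ be an undirected graph, define $p_1(\emptyset)=0$, $p_1(V)=|E|$, $p_1(X)=i_G(X)+1$ for $\emptyset\subset X\subset V$, and $B_1=\{x\in\mathbb{R}^V:\widetilde x(V)=p_1(V),\ \widetilde x(X)\ge p_1(X)\ \forall X\subset V\}$. Let $D$ be a strongly connected orientation of $G$ with in-degree vector $m$ and let $s,t\in V$. Then $m+\chi_s-\chi_t\in B_1$ if and only if $D$ contains two arc-disjoint directed paths from $s$ to $t$.
   Context: $i_G(X)$ is the number of edges with both end-nodes in $X$; $\widetilde x(X)=\sum_{v\in X}x(v)$; $\chi_v$ is the unit vector of $v$; $m(v)=\varrho_D(v)$ is the number of arcs with head $v$. *)

From mathcomp Require Import all_boot all_order all_algebra.
Set Implicit Arguments. Unset Strict Implicit. Unset Printing Implicit Defensive.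
Import Order.TTheory GRing.Theory Num.Theory.

(* A (multi)graph G = (V, E) together with an orientation D of it is given by
   a finite node type V, a finite edge type E, and for each edge e its tail
   [tl e] and head [hd e] in D; the undirected edge e of G joins tl e and hd e. *)

Section Defs.
Variables (V E : finType) (tl hd : E -> V).

Definition iG (X : {set V}) : nat := #|[set e | (tl e \in X) && (hd e \in X)]|.

Definition indeg (v : V) : nat := #|[set e | hd e == v]|.

Definition p1 (X : {set V}) : nat :=
  if X == set0 then 0%N
  else if X == setT then #|E|
  else (iG X).+1.

Local Open Scope ring_scope.

Definition xsum (R : numDomainType) (x : V -> R) (X : {set V}) : R :=
  \sum_(v in X) x v.

Definition inB1 (R : numDomainType) (x : V -> R) : Prop :=
  xsum x setT = (p1 setT)%:R /\ forall X : {set V}, (p1 X)%:R <= xsum x X.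

Definition chi (R : numDomainType) (v : V) : V -> R := fun u => (u == v)%:R.

Definition arcrel : rel V := fun u v => [exists e, (tl e == u) && (hd e == v)].
Definition strongly_connected : Prop := forall u v : V, connect arcrel u v.

Fixpoint arc_walk (u t : V) (p : seq E) : bool :=
  match p with
  | [::] => u == t
  | e :: p' => (tl e == u) && arc_walk (hd e) t p'
  end.
Definition dpath (s t : V) (p : seq E) : bool :=
  arc_walk s t p && uniq (s :: map hd p).

End Defs.

From mathcomp Require Import all_boot all_order all_algebra.
From mathcomp Require Import ring lra zify.
Import Order.TTheory GRing.Theory Num.Theory.

(* Every arc with head in X lies inside X or enters X, so the vector
   x = m + chi_s - chi_t has x~(X) = i_G(X) + rho(X) + [s in X] - [t in X], where
   rho(X) counts the arcs entering X.  As D is strongly connected, rho(X) >= 1 for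
   every nonempty proper X, hence x is in B_1 iff rho(X) >= 2 whenever t in X and
   s notin X: the arc version of Menger's theorem for two paths.  That is proved
   by augmentation.  Take an s-t path P.  Either the residual digraph (arcs off P
   forwards, arcs of P backwards) has an s-t path Q, and then augmenting P along Q
   gives a 0/1 flow of value 2, which contains two arc-disjoint s-t paths; or the
   set X of nodes it cannot reach from s is entered only by arcs of P and left by
   none, so that rho(X) equals the net number of crossings of P, namely 1. *)

Set Implicit Arguments. Unset Strict Implicit. Unset Printing Implicit Defensive.
Local Open Scope ring_scope.

Lemma sum_indicator (R : pzSemiRingType) (T : finType) (X : {pred T}) (w : T) :
  \sum_(v in X) (v == w)%:R = (w \in X)%:R :> R.
Proof.
rewrite big_mkcond (bigD1 w) //= eqxx big1 ?addr0; first by case: (w \in X).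
by move=> v /negPf ->; case: (v \in X).
Qed.

Section Digraph.
Variables (V E : finType) (tl hd : E -> V).

Definition enters (X : {set V}) (e : E) : bool := (tl e \notin X) && (hd e \in X).

Definition indeg_set (X : {set V}) : nat := #|[set e | enters X e]|.

Definition incidence (e : E) (v : V) : int := (v == hd e)%:R - (v == tl e)%:R.

Definition excess (F : {set E}) (v : V) : int := \sum_(e in F) incidence e v.

Definition arcrel_in (F : {set E}) : rel V :=
  fun u w => [exists e in F, (tl e == u) && (hd e == w)].

Lemma excess_indicator F v : excess F v = \sum_e (e \in F)%:R * incidence e v.
Proof.
rewrite /excess big_mkcond; apply: eq_bigr => e _.
by case: (e \in F); rewrite ?mul1r ?mul0r.
Qed.

Lemma sum_excess F (X : {set V}) :
  \sum_(v in X) excess F v = \sum_(e in F) ((hd e \in X)%:R - (tl e \in X)%:R).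
Proof.
by rewrite exchange_big; apply: eq_bigr => e _; rewrite sumrB !sum_indicator.
Qed.

Lemma sum_incidence_arc_walk u w p v :
  arc_walk tl hd u w p -> \sum_(e <- p) incidence e v = (v == w)%:R - (v == u)%:R.
Proof.
elim: p u => [|e p IH] u /=; first by move=> /eqP ->; rewrite big_nil subrr.
by case/andP => /eqP tl_e /IH; rewrite big_cons => ->; rewrite /incidence tl_e; ring.
Qed.

Lemma excess_dpath s t P v :
  dpath tl hd s t P -> excess [set e in P] v = (v == t)%:R - (v == s)%:R.
Proof.
case/andP => walk /= /andP[_ /map_uniq uniqP].
rewrite /excess (eq_bigl (mem P)) => [|e]; last by rewrite inE.
by rewrite -big_uniq //; apply: sum_incidence_arc_walk.
Qed.

Lemma arc_walk_enters (X : {set V}) u w p :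
  arc_walk tl hd u w p -> u \notin X -> w \in X -> exists2 e, e \in p & enters X e.
Proof.
elim: p u => [|e p IH] u /=; first by move=> /eqP -> /negPf ->.
case/andP => /eqP tl_e walk uX wX; have [hd_eX|hd_eX] := boolP (hd e \in X).
  by exists e; rewrite ?mem_head // /enters tl_e uX.
by have [f fp fX] := IH _ walk hd_eX wX; exists f; rewrite // in_cons fp orbT.
Qed.

Lemma path_arc_walk (F : {set E}) x p :
  path (arcrel_in F) x p ->
  exists P, [/\ arc_walk tl hd x (last x p) P, map hd P = p & {subset P <= F}].
Proof.
elim: p x => [|y p IH] x /=; first by move=> _; exists [::]; split; rewrite /= ?eqxx.
case/andP => /exists_inP[e eF /andP[/eqP tl_e /eqP <-]] /IH[P [walk hdP PF]].
exists (e :: P); split; [by rewrite /= tl_e eqxx | by rewrite /= hdP |].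
by move=> f /predU1P[->|/PF].
Qed.

Lemma connect_dpath (F : {set E}) s t :
  connect (arcrel_in F) s t -> exists2 P, dpath tl hd s t P & {subset P <= F}.
Proof.
move=> /connectP[p pth ->]; case: (shortenP pth) => q qpth uniq_q _.
have [P [walk hdP PF]] := path_arc_walk qpth.
by exists P; rewrite // /dpath walk hdP.
Qed.

Lemma dpath_or_cut (F : {set E}) s t :
  (exists2 P, dpath tl hd s t P & {subset P <= F}) \/
  exists X : {set V}, [/\ s \notin X, t \in X & forall e, e \in F -> ~~ enters X e].
Proof.
have [/connect_dpath|not_st] := boolP (connect (arcrel_in F) s t); first by left.
right; exists [set v | ~~ connect (arcrel_in F) s v].
split; rewrite ?inE ?connect0 // => e eF; rewrite /enters !inE negbK.
apply/andP => -[s_tl /negP[]]; apply: connect_trans s_tl (connect1 _).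
by apply/exists_inP; exists e; rewrite ?eqxx.
Qed.

Lemma dpath_of_excess (F : {set E}) s t k :
  (forall v, excess F v = ((v == t)%:R - (v == s)%:R) *+ k.+1) ->
  exists2 P, dpath tl hd s t P & {subset P <= F}.
Proof.
move=> exF; case: (dpath_or_cut F s t) => [//|[X [sX tX closed]]].
have : \sum_(v in X) excess F v = k.+1%:R.
  rewrite (eq_bigr _ (fun v _ => exF v)) sumrMnl sumrB !sum_indicator.
  by rewrite tX (negPf sX) /= subr0.
rewrite sum_excess => sumF.
have : \sum_(e in F) ((hd e \in X)%:R - (tl e \in X)%:R) <= 0 :> int.
  apply: sumr_le0 => e /closed; rewrite /enters.
  by case: (hd e \in X); case: (tl e \in X).
by rewrite sumF leNgt ltr0Sn.
Qed.

Lemma two_dpaths_of_excess (F : {set E}) s t :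
  (forall v, excess F v = ((v == t)%:R - (v == s)%:R) *+ 2) ->
  exists P1 P2, [/\ dpath tl hd s t P1, dpath tl hd s t P2 & [disjoint P1 & P2]].
Proof.
move=> exF; have [P1 P1st P1F] := dpath_of_excess exF.
have P1sub : [set e in P1] \subset F by apply/subsetP => e; rewrite inE => /P1F.
have [P2 P2st P2F] : exists2 P2, dpath tl hd s t P2 & {subset P2 <= F :\: [set e in P1]}.
  apply: (dpath_of_excess (k := 0)) => v; have := exF v.
  rewrite /excess (big_setID [set e in P1]) (setIidPr P1sub) /=.
  rewrite -/(excess [set e in P1] v) (excess_dpath v P1st) mulr2n; lra.
exists P1, P2; split => //; apply/pred0P => e /=; apply/negP => /andP[e1 e2].
by have := P2F e e2; rewrite !inE e1.
Qed.

Lemma indeg_set_ge2 s t P1 P2 (X : {set V}) :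
  dpath tl hd s t P1 -> dpath tl hd s t P2 -> [disjoint P1 & P2] ->
  s \notin X -> t \in X -> (1 < indeg_set X)%N.
Proof.
case/andP => walk1 _ /andP[walk2 _] disP sX tX.
have [e1 e1P1 enters1] := arc_walk_enters walk1 sX tX.
have [e2 e2P2 enters2] := arc_walk_enters walk2 sX tX.
have e12 : e1 != e2 by apply: contraTneq e2P2 => <-; rewrite (disjointFr disP).
have sub12 : [set e1; e2] \subset [set e | enters X e].
  by apply/subsetP => e; rewrite !inE => /orP[] /eqP ->.
by have := subset_leq_card sub12; rewrite cards2 e12.
Qed.

Lemma indeg_set_gt0 (X : {set V}) :
  strongly_connected tl hd -> X != set0 -> X != setT -> (0 < indeg_set X)%N.
Proof.
move=> sc /set0Pn[w wX]; rewrite -subTset => /subsetPn[u _ uX].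
have arcrelT : arcrel tl hd =2 arcrel_in setT.
  by move=> a b; apply: eq_existsb => e; rewrite in_setT.
have := sc u w; rewrite (eq_connect arcrelT) => /connect_dpath[P /andP[walk _] _].
have [e _ entersX] := arc_walk_enters walk uX wX.
by rewrite card_gt0; apply/set0Pn; exists e; rewrite inE.
Qed.

Lemma sum_indeg (X : {set V}) :
  (\sum_(v in X) indeg hd v)%N = (iG tl hd X + indeg_set X)%N.
Proof.
have -> : (iG tl hd X + indeg_set X)%N = #|[set e | hd e \in X]|.
  rewrite -(cardsID [set e | tl e \in X]) /iG /indeg_set /enters.
  by congr (_ + _)%N; apply: eq_card => e; rewrite !inE andbC.
rewrite -sum1dep_card (partition_big hd (mem X)) //=.
apply: eq_bigr => v vX; rewrite /indeg -sum1dep_card; apply: eq_bigl => e.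
by case: eqP => [->|_]; rewrite ?vX ?andbF.
Qed.

End Digraph.

Section Residual.
Variables (V E : finType) (tl hd : E -> V) (P : seq E).

(* (e, true) traverses e forwards and (e, false) traverses it backwards. *)
Definition res_tl (x : E * bool) : V := if x.2 then tl x.1 else hd x.1.
Definition res_hd (x : E * bool) : V := if x.2 then hd x.1 else tl x.1.

Definition residual : {set E * bool} := [set x | x.2 == (x.1 \notin P)].

Definition augment (Q : seq (E * bool)) : {set E} :=
  [set e | if e \in P then (e, false) \notin Q else (e, true) \in Q].

Lemma excess_residual (Q : seq (E * bool)) v :
  excess res_tl res_hd [set x in Q] v =
  \sum_e (((e, true) \in Q)%:R - ((e, false) \in Q)%:R) * incidence tl hd e v.
Proof.
rewrite excess_indicator; symmetry.
rewrite (eq_bigr (fun e => \sum_b ((e, b) \in Q)%:R * incidence res_tl res_hd (e, b) v)).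
  by rewrite pair_big; apply: eq_bigr => -[e b] _; rewrite inE.
by move=> e _; rewrite big_bool /incidence /res_tl /res_hd /=; ring.
Qed.

Lemma augment_indicator (Q : seq (E * bool)) e :
  {subset Q <= residual} ->
  (e \in augment Q)%:R = (e \in P)%:R + ((e, true) \in Q)%:R - ((e, false) \in Q)%:R :> int.
Proof.
move=> Qres; have := Qres (e, true); have := Qres (e, false); rewrite !inE /=.
move=> /implyP back_in_P /implyP fwd_notin_P.
by case: (e \in P) back_in_P fwd_notin_P; case: ((e, true) \in Q); case: ((e, false) \in Q).
Qed.

Lemma excess_augment s t (Q : seq (E * bool)) v :
  dpath tl hd s t P -> dpath res_tl res_hd s t Q -> {subset Q <= residual} ->
  excess tl hd (augment Q) v = ((v == t)%:R - (v == s)%:R) *+ 2.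
Proof.
move=> Pst Qst Qres.
rewrite excess_indicator (eq_bigr (fun e => (e \in [set e in P])%:R * incidence tl hd e v +
   (((e, true) \in Q)%:R - ((e, false) \in Q)%:R) * incidence tl hd e v)) => [|e _].
  rewrite big_split -excess_indicator -excess_residual.
  by rewrite (excess_dpath v Pst) (excess_dpath v Qst) mulr2n.
by rewrite augment_indicator // inE; ring.
Qed.

Lemma indeg_set_residual_cut s t (X : {set V}) :
  dpath tl hd s t P -> s \notin X -> t \in X ->
  (forall x, x \in residual -> ~~ enters res_tl res_hd X x) -> indeg_set tl hd X = 1%N.
Proof.
move=> Pst sX tX closed.
have entersP e : enters tl hd X e -> e \in P.
  by apply: contraTT => eP; have := closed (e, true); rewrite inE /= eP; apply.
have no_exit e : e \in P -> tl e \in X -> hd e \in X.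
  move=> eP tlX; apply: contraTT (closed (e, false) _); last by rewrite inE /= eP.
  by rewrite /enters tlX => ->.
have : \sum_(v in X) excess tl hd [set e in P] v = 1.
  by rewrite (eq_bigr _ (fun v _ => excess_dpath v Pst)) sumrB !sum_indicator tX (negPf sX).
rewrite sum_excess (eq_bigr (fun e => (enters tl hd X e)%:R)) => [|e]; last first.
  by rewrite inE /enters => /no_exit; case: (tl e \in X); case: (hd e \in X) => // ->.
rewrite -natr_sum => /eqP; rewrite pnatr_eq1 => /eqP <-.
rewrite -big_mkcondr sum1dep_card /indeg_set; apply: eq_card => e.
by rewrite !inE andb_idl // => /entersP.
Qed.

End Residual.

Section TwoArcDisjointPaths.
Variables (V E : finType) (tl hd : E -> V) (s t : V).

Lemma two_arc_disjoint_dpaths :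
  (forall X : {set V}, s \notin X -> t \in X -> (1 < indeg_set tl hd X)%N) ->
  exists P1 P2, [/\ dpath tl hd s t P1, dpath tl hd s t P2 & [disjoint P1 & P2]].
Proof.
move=> cuts.
have [[P Pst _]|[X [sX tX closed]]] := dpath_or_cut tl hd setT s t; last first.
  have := cuts X sX tX; rewrite /indeg_set (_ : [set e | _] = set0) ?cards0 //.
  by apply/setP => e; rewrite !inE; apply/negbTE/closed/in_setT.
have [[Q Qst Qres]|[X [sX tX closed]]] :=
  dpath_or_cut (res_tl tl hd) (res_hd tl hd) (residual P) s t.
  by apply: (two_dpaths_of_excess (F := augment P Q)) => v; apply: excess_augment.
by have := cuts X sX tX; rewrite (indeg_set_residual_cut Pst sX tX closed).
Qed.

Lemma two_arc_disjoint_dpathsP :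
  (forall X : {set V}, s \notin X -> t \in X -> (1 < indeg_set tl hd X)%N) <->
  exists P1 P2, [/\ dpath tl hd s t P1, dpath tl hd s t P2 & [disjoint P1 & P2]].
Proof.
split; first exact: two_arc_disjoint_dpaths.
by case=> P1 [P2 [P1st P2st disP]] X; apply: indeg_set_ge2 P1st P2st disP.
Qed.

End TwoArcDisjointPaths.

Section BaseB1.
Variables (R : realFieldType) (V E : finType) (tl hd : E -> V) (s t : V).

Lemma xsum_indeg_chi (X : {set V}) :
  xsum (fun v => (indeg hd v)%:R + chi R s v - chi R t v) X =
  (iG tl hd X + indeg_set tl hd X + (s \in X))%:R - (t \in X)%:R.
Proof.
by rewrite /xsum sumrB big_split -natr_sum (sum_indeg tl) /chi !sum_indicator !natrD.
Qed.

Lemma iG_setT : iG tl hd setT = #|E|.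
Proof. by rewrite /iG -cardsT; apply: eq_card => e; rewrite !inE. Qed.

Lemma indeg_setT : indeg_set tl hd setT = 0%N.
Proof. by apply: eq_card0 => e; rewrite !inE /enters in_setT. Qed.

Lemma inB1_iff_cuts :
  strongly_connected tl hd ->
  inB1 tl hd (fun v => (indeg hd v)%:R + chi R s v - chi R t v) <->
  (forall X : {set V}, s \notin X -> t \in X -> (1 < indeg_set tl hd X)%N).
Proof.
move=> sc; rewrite /inB1 /p1.
have T0 : (setT : {set V}) != set0 by apply/set0Pn; exists s.
have xT : xsum (fun v => (indeg hd v)%:R + chi R s v - chi R t v) setT = #|E|%:R.
  by rewrite xsum_indeg_chi iG_setT indeg_setT !in_setT addn0 natrD addrK.
split=> [[_ cond] X sX tX | cuts].
  have X0 : X != set0 by apply/set0Pn; exists t.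
  have XT : X != setT by apply: contraNneq sX => ->; rewrite in_setT.
  have := cond X; rewrite (negPf X0) (negPf XT) xsum_indeg_chi (negPf sX) tX addn0.
  rewrite /= -addn1 !natrD => H; rewrite -(ltr_nat R); lra.
split=> [|X]; first by rewrite xT (negPf T0) eqxx.
case: eqP => [->|/eqP X0]; first by rewrite /xsum big_set0.
case: eqP => [->|/eqP XT]; first by rewrite xT.
have pos := indeg_set_gt0 sc X0 XT.
have : ((iG tl hd X).+1 + (t \in X) <= iG tl hd X + indeg_set tl hd X + (s \in X))%N.
  case sX: (s \in X); case tX: (t \in X) => /=; try lia.
  by have := cuts X (negbT sX) tX; lia.
by rewrite -(ler_nat R) natrD xsum_indeg_chi => ?; lra.
Qed.

End BaseB1.

Unset Implicit Arguments.

Theorem claim6p3 (R : realFieldType) (V E : finType) (tl hd : E -> V)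
  (s t : V) :
  strongly_connected tl hd ->
  (inB1 tl hd (fun v => (indeg hd v)%:R + chi R s v - chi R t v) <->
   exists P1 P2 : seq E,
     [/\ dpath tl hd s t P1, dpath tl hd s t P2 & [disjoint P1 & P2]]).
Proof.
move=> sc; apply: iff_trans (inB1_iff_cuts R s t sc) _.
exact: two_arc_disjoint_dpathsP.
Qed.
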